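(* Let $p$ be a prime, $A\cong C_p\times C_p$, $G$ an abelian group acting on $A$ and $H\le G$. If $f\in\mathcal{E}(G,H,A)$ and $a\in A$ satisfies $f(a)<0$, then $\mathrm{C}_G(a)=\mathrm{C}_G(A)$.
   Context: $\mathrm{C}_G(S)$ denotes the pointwise stabilizer of $S\subseteq A$ in $G$. Definition of $\mathcal{E}(G,H,A)$ (for a group $G$ acting on a finite abelian group $A$ and $H\le G$): the set of functions $f:A\to\mathbb{Z}$ constant on $H$-orbits such that (I) $\sum_{X\in\mathrm{Cl}_H(A)}f(X)=1$, where $\mathrm{Cl}_H(A)$ is the set of $H$-orbits; (II) $f$ vanishes outside a single local $G$-class of $A$ ($a,b$ locally $G$-conjugate iff $a_r,b_r$ are $G$-conjugate for every prime $r$, $a_r$ the $r$-part); (III) $\sum_{c\in C}|\mathrm{C}_H(c)|f(c)\ge0$ for every coset $C$ of a minimal cocyclic subgroup of $A$ (a subgroup $L$ with $A/L$ cyclic, minimal with this property); (IV) $f(a)\ge -h_A[\mathrm{C}_H(a_{\pi_0}):\mathrm{C}_H(a)]$ for all $a$, where $\pi_0$ is the set of primes $r$ dividing $|A|$ with $A_r$ cyclic and $h_A=\frac{\sum_{X\in\pi^-}\prod_{r\in\pi}(r^{k_r-\Delta_X(r)}-1)}{\prod_{r\in\pi}(r-1)r^{k_r-1}}$ with $\pi$ the primes dividing $|A|$, $\pi^-$ the odd-cardinality subsets of $\pi$, $\Delta_X$ the characteristic function of $X$, $k_r$ the rank of the socle of $A_r$; (V) $f(a)<0$ for some $a$. 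*)

From HB Require Import structures.
From mathcomp Require Import all_boot all_order all_algebra all_fingroup all_solvable.
Set Implicit Arguments. Unset Strict Implicit. Unset Printing Implicit Defensive.
Import GRing.Theory Num.Theory.

Local Open Scope group_scope.

Section E.
Variables (gT aT : finGroupType) (G H : {group gT}) (A : {group aT}).
Variable to : groupAction G A.

Definition piA : seq nat := primes #|A|.

Definition pi0 : nat_pred := [pred r | (r \in primes #|A|) && cyclic 'O_r(A)].

(* k_r : rank of the socle of A_r (= r-rank of the abelian group A) *)
Definition kA (r : nat) : nat := 'r_r(A).

Definition hA : rat :=
  ((\sum_(X : {set 'I_(size piA)} | odd #|X|)
       \prod_(i < size piA)
          ((nth 0%N piA i)%:R ^+ (kA (nth 0%N piA i) - (i \in X)) - 1))
   / \prod_(i < size piA)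
       (((nth 0%N piA i)%:R - 1) * (nth 0%N piA i)%:R ^+ (kA (nth 0%N piA i)).-1))%R.

Definition loc_conj (a b : aT) : Prop :=
  forall r : nat, prime r -> exists2 g, g \in G & to (a.`_r) g = b.`_r.

Definition min_cocyclic (L : {group aT}) : Prop :=
  [min L of K | (K \subset A) && cyclic (A / K)].

Definition in_E (f : aT -> int) : Prop :=
  (forall a h, a \in A -> h \in H -> f (to a h) = f a) /\
  (\sum_(X in orbit to H @: A) f (repr X) = 1)%R /\
  (exists2 b, b \in A & forall a, a \in A -> f a <> 0%R -> loc_conj a b) /\
  (forall (L : {group aT}) x, min_cocyclic L -> x \in A ->
     (0 <= \sum_(c in L :* x) (#|'C_H[c | to]|%:Z * f c))%R) /\
  (forall a, a \in A ->
     ((f a)%:~R >= - hA * (#|'C_H[a.`_pi0 | to] : 'C_H[a | to]|)%:R :> rat)%R) /\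
  (exists2 a, a \in A & (f a < 0)%R).

End E.

From HB Require Import structures.
From mathcomp Require Import all_boot all_order all_algebra all_fingroup all_solvable.

Set Implicit Arguments.
Unset Strict Implicit.
Unset Printing Implicit Defensive.

Import Order.TTheory GRing.Theory Num.Theory.

(* For A = C_p x C_p, pi_0 is empty and h_A = 1/p, so (IV) reads
   f(a) >= -|a^H| / p; a negative integer value of f thus forces |a^H| >= p.
   As G is abelian, the points of A fixed by C_G(a) contain the orbit a^H and
   also 1, which lies outside a^H; this subgroup of A has more than p elements,
   so it is all of A, i.e. C_G(a) fixes A pointwise. *)

Local Open Scope ring_scope.

Lemma leq_of_neg_int_lower_bound (z : int) p n :
  (0 < p)%N -> z < 0 -> - p%:R^-1 * n%:R <= z%:~R :> rat -> (p <= n)%N.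
Proof.
move=> p_gt0 z_lt0 z_ge.
have z_le : z%:~R <= - 1 :> rat.
  by rewrite -[-1 : rat]/((-1 : int)%:~R) ler_int -ltzD1 addNr.
have : 1 <= n%:R / p%:R :> rat.
  by rewrite -lerN2 mulrC -mulNr (le_trans z_ge z_le).
by rewrite ler_pdivlMr ?ltr0n // mul1r ler_nat.
Qed.

Lemma hA_abelem_p2 (aT : finGroupType) (A : {group aT}) p :
  prime p -> (p.-abelem A)%g -> #|A| = (p ^ 2)%N -> hA A = p%:R^-1.
Proof.
move=> p_pr abelA oA.
have rankA : kA A p = 2%N by rewrite /kA p_rank_abelem // oA pfactorK.
rewrite /hA /piA oA primesX // primes_prime //.
have odd_setT (X : {set 'I_1}) : odd #|X| = (X == setT).
  apply/idP/eqP => [oddX|->]; last by rewrite cardsT card_ord.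
  apply/eqP; rewrite eqEcard subsetT cardsT card_ord.
  by move: (max_card X) oddX; rewrite card_ord; case: #|X| => [|[]].
rewrite (eq_bigl (pred1 setT)) ?big_pred1_eq; last by move=> X; rewrite /= odd_setT.
rewrite !big_ord1 /= rankA inE /= expr1.
have p_neq0 : p%:R != 0 :> rat by rewrite pnatr_eq0 -lt0n prime_gt0.
have p1_neq0 : p%:R - 1 != 0 :> rat.
  by rewrite subr_eq0 pnatr_eq1 -(subnK (prime_gt1 p_pr)) addn2.
by rewrite invfM mulrA mulfV // mul1r.
Qed.

Local Close Scope ring_scope.
Local Open Scope group_scope.

Lemma constt_pi0_abelem_p2 (aT : finGroupType) (A : {group aT}) p a :
  prime p -> p.-abelem A -> #|A| = (p ^ 2)%N -> a \in A -> a.`_(pi0 A) = 1.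
Proof.
move=> p_pr abelA oA Aa; apply/constt1P.
rewrite /p_elt /pnat order_gt0 /=; apply/allP => r.
rewrite mem_primes => /and3P[r_pr _ r_dv_a].
have : r \in primes #|A|.
  by rewrite mem_primes r_pr oA expn_gt0 prime_gt0 //= -oA
             (dvdn_trans r_dv_a (order_dvdG Aa)).
rewrite oA primesX // primes_prime // inE => /eqP ->.
rewrite !inE /= negb_and; apply/orP; right.
by rewrite pcore_pgroup_id ?(abelem_pgroup abelA) // (abelem_cyclic abelA) oA pfactorK.
Qed.

Section GroupActionOrbits.

Variables (aT rT : finGroupType) (D : {group aT}) (R : {group rT}).
Variable to : groupAction D R.

Lemma astab1_gact1_in (H : {group aT}) : H \subset D -> 'C_H[1 | to] = H.
Proof. by rewrite astab1 => /setIidPl. Qed.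

Lemma orbit_gact1 (H : {group aT}) : H \subset D -> orbit to H 1 = [set 1].
Proof.
by move=> sHD; apply/orbit1P/afixP => h Hh; rewrite gact1 ?(subsetP sHD).
Qed.

Lemma gact1_notin_orbit (H : {group aT}) x :
  H \subset D -> 1 < #|orbit to H x| -> 1 \notin orbit to H x.
Proof.
move=> sHD; apply: contraTN => /(orbit_in_eqP sHD) <-.
by rewrite orbit_gact1 // cards1.
Qed.

Lemma orbit_sub_gacent_astab1 (H : {group aT}) x :
  abelian D -> H \subset D -> x \in R ->
  orbit to H x \subset 'C_(|to)('C_D[x | to]).
Proof.
move=> abelD sHD Rx; apply/subsetP => _ /orbitP[h Hh <-].
have Dh := subsetP sHD h Hh.
rewrite gacentE ?subsetIl // inE (gact_stable to Dh) Rx /=.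
apply/afixP => g /setIP[Dg]; rewrite !inE sub1set inE => /andP[_ /eqP xg].
by rewrite -actMin // -(centsP abelD g Dg h Dh) actMin // xg.
Qed.

End GroupActionOrbits.

Lemma eq_subgroup_p2_of_card_gt (gT : finGroupType) (B A : {group gT}) p :
  prime p -> #|A| = (p ^ 2)%N -> B \subset A -> p < #|B| -> B :=: A.
Proof.
move=> p_pr oA sBA oB; apply/eqP; rewrite eqEcard sBA oA /=.
have /(dvdn_pfactor _ _ p_pr)[[|[|[|m]]] // _ oB'] : #|B| %| p ^ 2.
  by rewrite -oA cardSg.
- by move: oB; rewrite oB' ltnNge prime_gt0.
- by move: oB; rewrite oB' ltnn.
- by rewrite oB'.
Qed.

Theorem lemma5p1 (gT aT : finGroupType) (p : nat) (G H : {group gT})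
  (A : {group aT}) (to : groupAction G A) (f : aT -> int) (a : aT) :
  prime p -> (p.-abelem A)%g -> #|A| = (p ^ 2)%N ->
  abelian G -> H \subset G ->
  in_E H to f -> a \in A -> (f a < 0)%R ->
  ('C_G[a | to] = 'C_G(A | to))%g.
Proof.
move=> p_pr abelA oA abelG sHG [_ [_ [_ [_ [f_ge _]]]]] Aa fa_lt0.
have orbit_ge : p <= #|orbit to H a|.
  apply: (leq_of_neg_int_lower_bound (prime_gt0 p_pr) fa_lt0).
  move: (f_ge a Aa); rewrite (hA_abelem_p2 p_pr abelA oA).
  by rewrite (constt_pi0_abelem_p2 p_pr abelA oA Aa) astab1_gact1_in // -card_orbit_in.
set C := 'C_G[a | to].
have sFA : 'C_(|to)(C) \subset A by rewrite gacentE ?subsetIl.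
have oF : p < #|'C_(|to)(C)|.
  apply: (leq_ltn_trans orbit_ge); apply: proper_card.
  rewrite properE orbit_sub_gacent_astab1 //=.
  apply/subsetPn; exists 1; first exact: group1.
  by apply: gact1_notin_orbit; rewrite // (leq_trans (prime_gt1 p_pr)).
have FA := eq_subgroup_p2_of_card_gt p_pr oA sFA oF.
apply/eqP; rewrite eqEsubset subsetI subsetIl -gacentC ?subsetIl // FA subxx /=.
by rewrite setIS // astabS // sub1set.
Qed.
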